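(* Let $X,Y,Z$ be complex Banach spaces, $\emptyset\ne I\subseteq\mathbb R^n$, let $\mathcal B$ be a non-empty collection of non-empty subsets of $X$ such that every $x\in X$ belongs to some $B\in\mathcal B$, and let $\mathrm R$ be a non-empty collection of sequences in $\mathbb R^n$ such that $\mathbf t+\mathbf b(l)\in I$ whenever $\mathbf t\in I$, $\mathbf b\in\mathrm R$, $l\in\mathbb N$. Suppose $F:I\times X\to Y$ is $(\mathrm R,\mathcal B)$-multi-almost periodic and $G:I\times Y\to Z$ is $(\mathrm R',\mathcal B')$-multi-almost periodic, where $\mathrm R'$ consists of all sequences from $\mathrm R$ together with all their subsequences and $\mathcal B':=\{\bigcup_{\mathbf t\in I}F(\mathbf t;B):B\in\mathcal B\}$. If there exists $L>0$ with $\|G(\mathbf t;x)-G(\mathbf t;y)\|_Z\le L\|x-y\|_Y$ for all $\mathbf t\in I$, $x,y\in Y$, then $W(\mathbf t;x):=G(\mathbf t;F(\mathbf t;x))$, $\mathbf t\in I$, $x\in X$, is $(\mathrm R,\mathcal B)$-multi-almost periodic.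
   Context: For Banach spaces $U,V$, a collection $\mathcal C$ of subsets of $U$ and a collection $\mathrm S$ of sequences in $\mathbb R^n$ with $\mathbf t+\mathbf b(l)\in I$ for $\mathbf t\in I$, $\mathbf b\in\mathrm S$, a continuous $H:I\times U\to V$ is $(\mathrm S,\mathcal C)$-multi-almost periodic if for every $C\in\mathcal C$ and every $(\mathbf b_k)\in\mathrm S$ there exist a subsequence $(\mathbf b_{k_l})$ and $H^\ast:I\times U\to V$ with $H(\mathbf t+\mathbf b_{k_l};u)\to H^\ast(\mathbf t;u)$ uniformly for $u\in C$, $\mathbf t\in I$. *)

From mathcomp Require Import all_boot all_order all_algebra.
From mathcomp Require Import all_classical all_reals all_analysis.
From mathcomp Require Import complex.
Import Order.TTheory GRing.Theory Num.Theory.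
Import numFieldNormedType.Exports.
Local Open Scope ring_scope.
Local Open Scope classical_set_scope.

Set Implicit Arguments.
Unset Strict Implicit.
Unset Printing Implicit Defensive.

Definition strict_incr (k : nat -> nat) : Prop :=
  forall i j : nat, (i < j)%N -> (k i < k j)%N.

(* H is given as a total function 'rV_n -> U -> V; only its values on I x U
   matter. *)
Definition multi_almost_periodic (R : realType) (n : nat)
  (U V : completeNormedModType R[i]) (I : set 'rV[R]_n)
  (S : set (nat -> 'rV[R]_n)) (C : set (set U)) (H : 'rV[R]_n -> U -> V) : Prop :=
  {within [set p : 'rV[R]_n * U | I p.1], continuous (fun p => H p.1 p.2)} /\
  forall D, C D -> forall b, S b ->
    exists k : nat -> nat, strict_incr k /\
    exists Hs : 'rV[R]_n -> U -> V,
      forall eps : R, 0 < eps -> exists N : nat, forall l : nat, (N <= l)%N ->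
        forall t u, I t -> D u -> `|H (t + b (k l)) u - Hs t u| < (eps%:C)%C.

Definition with_subsequences (R : realType) (n : nat) (S : set (nat -> 'rV[R]_n))
  : set (nat -> 'rV[R]_n) :=
  [set b' | exists b, S b /\ exists k, strict_incr k /\ b' = (fun l => b (k l))].

Definition image_collection (R : realType) (n : nat) (X Y : Type)
  (I : set 'rV[R]_n) (F : 'rV[R]_n -> X -> Y) (B : set (set X)) : set (set Y) :=
  [set D | exists A, B A /\ D = [set y | exists t, I t /\ exists x, A x /\ y = F t x]].

From mathcomp Require Import all_boot all_order all_algebra.
From mathcomp Require Import all_classical all_reals all_analysis.
From mathcomp Require Import complex.
From mathcomp Require Import zify ring.
Import Order.TTheory GRing.Theory Num.Theory.
Import numFieldNormedType.Exports.
Local Open Scope ring_scope.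
Local Open Scope classical_set_scope.

(* Given B and a sequence b, pass to a subsequence c of b along which F
   converges uniformly on I x B, and then to one along which G converges
   uniformly on I x (union of the F(t; B)).  The natural candidate limit
   G*(t; F*(t; x)) is of no use, since F*(t; x) need not lie in the set where
   G converges; instead, the Lipschitz bound on G makes
   G(t + c_l; F(t + c_l; x)) uniformly Cauchy on I x B, and completeness of Z
   supplies the limit. *)

Lemma within_continuous_comp_mapsto {U V W : topologicalType}
    (A : set U) (B : set V) (f : U -> V) (g : V -> W) :
  (forall x, A x -> B (f x)) ->
  {within A, continuous f} -> {within B, continuous g} ->
  {within A, continuous (g \o f)}.
Proof.
move=> fAB /subspace_continuousP cf /subspace_continuousP cg.
apply/subspace_continuousP => x Ax.
have fx_within : f @ within A (nbhs x) --> within B (nbhs (f x)).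
  move=> P /= BP; have /= := cf x Ax _ BP.
  rewrite !nbhs_simpl /fmap /from_subspace /within /=.
  by apply: filterS => y PBy Ay; exact: PBy Ay (fAB y Ay).
exact: cvg_comp fx_within (cg _ (fAB x Ax)).
Qed.

Lemma within_continuous_fiberwise_comp {T X Y Z : topologicalType}
    (I : set T) (F : T -> X -> Y) (G : T -> Y -> Z) :
  {within [set p : T * X | I p.1], continuous (fun p => F p.1 p.2)} ->
  {within [set p : T * Y | I p.1], continuous (fun p => G p.1 p.2)} ->
  {within [set p : T * X | I p.1], continuous (fun p => G p.1 (F p.1 p.2))}.
Proof.
move=> /subspace_continuousP cF cG.
apply: (@within_continuous_comp_mapsto _ _ _ _ _
  (fun p => (p.1, F p.1 p.2)) _ (fun p Ip => Ip) _ cG).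
apply/subspace_continuousP => p Ip; apply: cvg_pair; last exact: cF p Ip.
by apply: cvg_within_filter; exact: cvg_fst.
Qed.

Lemma strict_incr_ge {k : nat -> nat} : strict_incr k -> forall l, (l <= k l)%N.
Proof. by move=> k_incr; elim=> [|l IHl] //; have := k_incr l l.+1 (ltnSn l); lia. Qed.

Lemma strict_incr_comp (k k' : nat -> nat) :
  strict_incr k -> strict_incr k' -> strict_incr (k \o k').
Proof. by move=> k_incr k'_incr i j /k'_incr /k_incr. Qed.

Section UniformConvergence.
Context {K : numFieldType} {T U : Type} {V : normedModType K}.
Implicit Types (I : set T) (D : set U) (h : nat -> T -> U -> V) (g : T -> U -> V).

Definition uniform_cvg_on I D h g :=
  forall e : K, 0 < e -> exists N, forall l, (N <= l)%N ->
    forall t u, I t -> D u -> `|h l t u - g t u| < e.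

Definition uniform_cauchy_on I D h :=
  forall e : K, 0 < e -> exists N, forall l m, (N <= l)%N -> (N <= m)%N ->
    forall t u, I t -> D u -> `|h l t u - h m t u| < e.

Lemma uniform_cvg_subseq {I D h g} {k : nat -> nat} :
  strict_incr k -> uniform_cvg_on I D h g -> uniform_cvg_on I D (fun l => h (k l)) g.
Proof.
move=> k_incr hg e e0; have [N hN] := hg e e0.
by exists N => l Nl; apply: hN; exact: leq_trans Nl (strict_incr_ge k_incr l).
Qed.

Lemma uniform_cvg_cauchy {I D h g} : uniform_cvg_on I D h g -> uniform_cauchy_on I D h.
Proof.
move=> hg e e0; have e20 : 0 < e / 2 by rewrite divr_gt0.
have [N hN] := hg _ e20.
exists N => l m Nl Nm t u It Du; rewrite (splitr e).
apply: le_lt_trans (ler_distD (g t u) _ _) _.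
by apply: ltrD; [|rewrite distrC]; exact: hN.
Qed.

End UniformConvergence.

Lemma uniform_cauchy_cvg {K : numFieldType} {T U : Type} {V : completeNormedModType K}
    {I : set T} {D : set U} {h : nat -> T -> U -> V} :
  uniform_cauchy_on I D h -> exists g, uniform_cvg_on I D h g.
Proof.
move=> hC; exists (fun t u => lim ((fun l => h l t u) @ \oo)) => e e0.
have e20 : 0 < e / 2 by rewrite divr_gt0.
have [N hN] := hC _ e20; exists N => l Nl t u It Du.
have : cvg ((fun l => h l t u) @ \oo).
  apply/cauchy_cvgP/cauchy_exP => e' e'0; have [N' hN'] := hC e' e'0.
  exists (h N' t u), N' => // m N'm /=.
  by rewrite -ball_normE /ball_ /=; exact: hN'.
move=> /cvgr_dist_lt /(_ _ e20) [M _ hM].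
have hMN := hM (maxn N M) (leq_maxr _ _).
apply: le_lt_trans (ler_distD (h (maxn N M) t u) _ _) _.
rewrite (splitr e); apply: ltrD; last by rewrite distrC.
by apply: hN; rewrite // leq_maxl.
Qed.

Lemma uniform_cauchy_comp {K : numFieldType} {T X : Type} {Y Z : normedModType K}
    {I : set T} {D : set X} (E : set Y)
    (f : nat -> T -> X -> Y) (g : nat -> T -> Y -> Z) (L : K) :
  0 <= L ->
  (forall l t y y', I t -> `|g l t y - g l t y'| <= L * `|y - y'|) ->
  (forall l t x, I t -> D x -> E (f l t x)) ->
  uniform_cauchy_on I D f -> uniform_cauchy_on I E g ->
  uniform_cauchy_on I D (fun l t x => g l t (f l t x)).
Proof.
move=> L0 g_lip fDE f_cauchy g_cauchy e e0.
have L1_gt0 : 0 < L + 1 by rewrite ltr_wpDl.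
pose d := e / (L + 1); have d0 : 0 < d by rewrite divr_gt0.
have [N1 hN1] := f_cauchy d d0; have [N2 hN2] := g_cauchy d d0.
exists (maxn N1 N2) => l m /[!geq_max] /andP[N1l N2l] /andP[N1m N2m] t x It Dx.
have -> : e = L * d + d by rewrite /d; field; rewrite gt_eqF.
apply: le_lt_trans (ler_distD (g l t (f m t x)) _ _) _.
apply: ler_ltD; last by apply: hN2 => //; exact: fDE.
apply: le_trans (g_lip _ _ _ _ It) _.
by rewrite ler_wpM2l // ltW // hN1.
Qed.

Lemma uniform_cvg_on_complexE (R : realType) (T U : Type) (V : normedModType R[i])
    (I : set T) (D : set U) (h : nat -> T -> U -> V) (g : T -> U -> V) :
  uniform_cvg_on I D h g <->
  forall eps : R, 0 < eps -> exists N, forall l, (N <= l)%N ->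
    forall t u, I t -> D u -> `|h l t u - g t u| < (eps%:C)%C.
Proof.
split=> [hg eps eps0|hg [a b]]; first by apply: hg; rewrite ltcR.
by rewrite ltcE /= => /andP[/eqP-> a0]; exact: hg.
Qed.

Theorem theorem2p45 (R : realType) (n : nat)
  (X Y Z : completeNormedModType R[i])
  (I : set 'rV[R]_n) (B : set (set X)) (RR : set (nat -> 'rV[R]_n))
  (F : 'rV[R]_n -> X -> Y) (G : 'rV[R]_n -> Y -> Z) :
  I !=set0 ->
  B !=set0 ->
  (forall A, B A -> A !=set0) ->
  (forall x : X, exists A, B A /\ A x) ->
  RR !=set0 ->
  (forall t b l, I t -> RR b -> I (t + b l)) ->
  multi_almost_periodic I RR B F ->
  multi_almost_periodic I (with_subsequences RR) (image_collection I F B) G ->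
  (exists L : R, 0 < L /\
     forall t (x y : Y), I t -> `|G t x - G t y| <= (L%:C)%C * `|x - y|) ->
  multi_almost_periodic I RR B (fun t x => G t (F t x)).
Proof.
move=> _ _ _ _ _ I_shift [cF F_map] [cG G_map] [L [L0 G_lip]].
split; first exact: within_continuous_fiberwise_comp cF cG.
move=> D BD b Rb.
have [k1 [k1_incr [Fs /uniform_cvg_on_complexE F_cvg]]] := F_map D BD b Rb.
pose D' := [set y | exists t, I t /\ exists x, D x /\ y = F t x].
have BD' : image_collection I F B D' by exists D.
have Rbk1 : with_subsequences RR (b \o k1) by exists b; split => //; exists k1.
have [k2 [k2_incr [Gs /uniform_cvg_on_complexE G_cvg]]] := G_map D' BD' _ Rbk1.
have I_shift_c t l : I t -> I (t + b (k1 (k2 l))) by move=> It; exact: I_shift.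
have W_cauchy : uniform_cauchy_on I D
    (fun l t x => G (t + b (k1 (k2 l))) (F (t + b (k1 (k2 l))) x)).
  apply: (uniform_cauchy_comp D'
    (fun l t x => F (t + b (k1 (k2 l))) x) (fun l t y => G (t + b (k1 (k2 l))) y) L%:C%C).
  - by rewrite lecR ltW.
  - by move=> l t y y' It; exact: G_lip (I_shift_c t l It).
  - by move=> l t x It Dx; exists (t + b (k1 (k2 l))); split; [exact: I_shift_c|exists x].
  - exact: uniform_cvg_cauchy (uniform_cvg_subseq k2_incr F_cvg).
  - exact: uniform_cvg_cauchy G_cvg.
have [Ws W_cvg] := uniform_cauchy_cvg W_cauchy.
exists (k1 \o k2); split; first exact: strict_incr_comp.
by exists Ws; apply/uniform_cvg_on_complexE.
Qed.
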